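(* Let $G$ be a finite group with $G=\langle x,y\rangle$, where $x$ has order $4$, $y$ has order at least $5$, and $xy$ has order at least $3$. Then $\mathrm{Cay}(G,\{x,y\})$ is an oriented regular representation (ORR) of $G$, unless $y$ has order $12$, $x=y^9$, and $G\cong\mathbb{Z}_{12}$.
   Context: For a group $G$ and $S\subseteq G$, the Cayley digraph $\mathrm{Cay}(G,S)$ has vertex set $G$, and $(u,v)$ is an arc whenever $vu^{-1}\in S$. Its automorphism group consists of the permutations of $G$ preserving the arc set, and always contains the right regular representation of $G$. $\mathrm{Cay}(G,S)$ is an oriented regular representation (ORR) if its automorphism group equals the right regular representation of $G$ and it is a proper digraph, i.e. $(u,v)$ being an arc implies $(v,u)$ is not an arc (equivalently $S\cap S^{-1}=\emptyset$). *)

From mathcomp Require Import all_boot all_fingroup all_algebra.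
Set Implicit Arguments. Unset Strict Implicit. Unset Printing Implicit Defensive.
Import GroupScope.
Local Open Scope group_scope.

Definition cay_arc (gT : finGroupType) (S : {set gT}) (u v : gT) : bool :=
  v * u^-1 \in S.

Definition cay_aut (gT : finGroupType) (G : {group gT}) (S : {set gT})
    (f : gT -> gT) : Prop :=
  [/\ {in G &, injective f}, f @: G = G &
      {in G &, forall u v, cay_arc S (f u) (f v) = cay_arc S u v}].

(* Cay(G,S) is an ORR: proper digraph (S and S^-1 disjoint) and every
   automorphism is a right translation u |-> u * g with g \in G. *)
Definition is_ORR (gT : finGroupType) (G : {group gT}) (S : {set gT}) : Prop :=
  [disjoint S & S^-1] /\
  (forall f : gT -> gT, cay_aut G S f ->
     exists2 g, g \in G & {in G, forall u, f u = u * g}).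

From mathcomp Require Import all_boot all_fingroup all_algebra.
From mathcomp Require Import all_solvable.
Local Open Scope group_scope.

(* An automorphism f of Cay(G, {x, y}) maps each arc u -> s u to an arc
   f u -> t (f u), t in {x, y}.  If f u = u g, the x-arc at u lies on the
   directed 4-cycle u, x u, x^2 u, x^3 u, so it cannot be sent to the y-arc:
   that would produce a relation t3 t2 t1 y = 1 with t_i in {x, y}, and the
   order hypotheses leave only x y^3 = 1, which forces the exceptional case.
   Hence f (x u) = x u g, and then injectivity forces f (y u) = y u g.
   Since x and y generate G, f is the right translation by f 1. *)

Section GroupFacts.
Variable gT : finGroupType.
Implicit Types (a b : gT) (A H : {set gT}).

Lemma mulg_eq1C a b : (a * b == 1) = (b * a == 1).
Proof. by rewrite -(conjg_eq1 _ a) conjgE -mulgA mulKg. Qed.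

Lemma expg_neq1 a n : 0 < n -> n < #[a] -> a ^+ n != 1.
Proof.
move=> n_gt0 lt_n_a; rewrite -order_dvdn.
by apply: contraTN lt_n_a => /(dvdn_leq n_gt0); rewrite leqNgt.
Qed.

Lemma gen_subset_lmul_closed A H :
  1 \in H -> (forall a h, a \in A -> h \in H -> a * h \in H) -> <<A>> \subset H.
Proof.
move=> H1 mulAH; apply/subsetP => _ /gen_prodgP [n [c cA ->]].
elim: n c cA => [|n IHn] c cA; first by rewrite big_ord0.
by rewrite big_ord_recl; apply: mulAH => //; apply: IHn.
Qed.

Lemma rtrans_from_generators (G : {group gT}) A (f : gT -> gT) :
  G :=: <<A>> ->
  (forall u a g, u \in G -> a \in A -> f u = u * g -> f (a * u) = a * u * g) ->
  {in G, forall u, f u = u * f 1}.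
Proof.
move=> GA fA.
have: <<A>> \subset [set v in G | f v == v * f 1].
  apply: gen_subset_lmul_closed => [|a v aA].
    by rewrite inE group1 mul1g eqxx.
  rewrite !inE => /andP [vG /eqP fv].
  have aG : a \in G by rewrite GA mem_gen.
  by rewrite groupM //=; apply/eqP; apply: fA.
by move=> GAsub u; rewrite GA => /(subsetP GAsub); rewrite inE => /andP [_ /eqP].
Qed.

Lemma disjoint_set2_inv a b :
  a ^+ 2 != 1 -> b ^+ 2 != 1 -> a * b != 1 ->
  [disjoint [set a; b] & [set a; b]^-1].
Proof.
rewrite !expgS !expg0 !mulg1 => /negbTE a2 /negbTE b2 /negbTE ab.
apply/pred0P => z; rewrite !inE /=; apply/negbTE/negP.
by case/andP => /orP [] /eqP -> /orP [];
  rewrite eq_invg_mul ?a2 ?b2 ?ab // mulg_eq1C ab.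
Qed.

End GroupFacts.

Section CayleyAutomorphism.
Context {gT : finGroupType} {G : {group gT}} {S : {set gT}} {f : gT -> gT}.
Hypotheses (sSG : S \subset G) (autf : cay_aut G S f).

Lemma cay_aut_mem {u} : u \in G -> f u \in G.
Proof. by case: autf => _ fG _ uG; rewrite -fG imset_f. Qed.

Lemma cay_aut_arc {u s} :
  u \in G -> s \in S -> exists2 t, t \in S & f (s * u) = t * f u.
Proof.
case: autf => _ _ farc uG sS; have sG := subsetP sSG s sS.
exists (f (s * u) * (f u)^-1); last by rewrite mulgVK.
by have := farc u (s * u) uG (groupM sG uG); rewrite /cay_arc mulgK sS.
Qed.

End CayleyAutomorphism.

Section OrderFourGenerator.
Variables (gT : finGroupType) (x y : gT).
Hypotheses (ox : #[x] = 4) (oy : 4 < #[y]) (oxy : 2 < #[x * y]).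
Hypothesis xy3 : x * y ^+ 3 != 1.

Lemma expx4 : x ^+ 4 = 1.
Proof. by rewrite -ox expg_order. Qed.

Lemma cay_set2_proper : [disjoint [set x; y] & [set x; y]^-1].
Proof.
apply: disjoint_set2_inv; rewrite ?expg_neq1 ?ox ?(ltn_trans _ oy) //.
by rewrite -order_eq1; apply: contraTneq oxy => ->.
Qed.

Lemma closed_4walk_not_via_y {t1 t2 t3} :
  t1 \in [set x; y] -> t2 \in [set x; y] -> t3 \in [set x; y] ->
  t3 * (t2 * (t1 * y)) != 1.
Proof.
have y4 : y ^+ 4 != 1 by exact: expg_neq1.
have xy2 : (x * y) ^+ 2 != 1 by exact: expg_neq1.
have x3y : x ^+ 3 * y != 1.
  rewrite -expx4 (expgSr x 3) (inj_eq (mulgI _)).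
  by apply: contraTneq oy => ->; rewrite ox.
have x2y2 : x ^+ 2 * y ^+ 2 != 1.
  apply: contra y4 => /eqP/mulg1_eq y2.
  by rewrite (expgM y 2 2) -y2 expgVn -expgM expx4 invg1.
move: xy3 y4 xy2 x3y x2y2; rewrite !expgS !expg0 !mulg1 !mulgA => ? ? ? ? ?.
(* Up to rotation, each of the eight words is one of the five excluded above. *)
move=> /set2P [] -> /set2P [] -> /set2P [] ->;
  by do 3![done | rewrite mulg_eq1C !mulgA].
Qed.

Section Automorphism.
Variables (G : {group gT}) (f : gT -> gT).
Hypotheses (GE : G :=: <<[set x; y]>>) (autf : cay_aut G [set x; y] f).

Let sSG : [set x; y] \subset G. Proof. by rewrite GE sub_gen. Qed.
Let xG : x \in G. Proof. by rewrite (subsetP sSG) ?set21. Qed.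
Let yG : y \in G. Proof. by rewrite (subsetP sSG) ?set22. Qed.

Lemma cay_set2_aut_rtrans_x {u g} :
  u \in G -> f u = u * g -> f (x * u) = x * u * g.
Proof.
move=> uG fu; have xS := set21 x y.
have [_ /set2P [-> -> | -> fxu]] := cay_aut_arc sSG autf uG xS.
  by rewrite fu mulgA.
have xuG v : v \in G -> x * v \in G by exact: groupM.
have [t2 t2S e2] := cay_aut_arc sSG autf (xuG _ uG) xS.
have [t3 t3S e3] := cay_aut_arc sSG autf (xuG _ (xuG _ uG)) xS.
have [t4 t4S e4] := cay_aut_arc sSG autf (xuG _ (xuG _ (xuG _ uG))) xS.
have x4u : x * (x * (x * (x * u))) = u.
  by rewrite -[u in RHS]mul1g -expx4 !expgS expg0 mulg1 !mulgA.
rewrite x4u e3 e2 fxu in e4.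
have /eqP[] := closed_4walk_not_via_y t2S t3S t4S.
by apply: (mulIg (f u)); rewrite mul1g -!mulgA -e4.
Qed.

Lemma cay_set2_aut_rtrans_y {u g} :
  u \in G -> f u = u * g -> f (y * u) = y * u * g.
Proof.
move=> uG fu; have [_ /set2P [] -> fyu] := cay_aut_arc sSG autf uG (set22 x y).
  have: f (y * u) = f (x * u).
    by rewrite fyu (cay_set2_aut_rtrans_x uG fu) fu mulgA.
  case: autf => finj _ _ /(finj _ _ (groupM yG uG) (groupM xG uG)) /mulIg yx.
  by move: oy; rewrite yx ox.
by rewrite fyu fu mulgA.
Qed.

Lemma cay_set2_aut_rtrans : exists2 g, g \in G & {in G, forall u, f u = u * g}.
Proof.
exists (f 1); first exact: (cay_aut_mem autf (group1 G)).
apply: rtrans_from_generators GE _ => u s g uG /set2P [] ->.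
  exact: cay_set2_aut_rtrans_x.
exact: cay_set2_aut_rtrans_y.
Qed.

End Automorphism.

Lemma cay_set2_ORR (G : {group gT}) : G :=: <<[set x; y]>> -> is_ORR G [set x; y].
Proof.
move=> GE; split; first exact: cay_set2_proper.
by move=> f autf; exact: cay_set2_aut_rtrans.
Qed.

End OrderFourGenerator.

Lemma divn_gcd3_eq4 n : 4 < n -> n %/ gcdn n 3 = 4 -> n = 12.
Proof.
move=> n_gt4 eq4; have n_eq := divnK (dvdn_gcdl n 3); rewrite eq4 in n_eq.
have /primeP [_ /(_ _ (dvdn_gcdr n 3)) /orP [] /eqP g3] : prime 3 by [].
  by rewrite g3 in n_eq; rewrite -n_eq in n_gt4.
by rewrite -n_eq g3.
Qed.

Lemma cube_inverse_generator_Zp12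
    {gT : finGroupType} {G : {group gT}} {x y : gT} :
  G :=: <<[set x; y]>> -> #[x] = 4 -> 4 < #[y] -> x * y ^+ 3 = 1 ->
  [/\ #[y] = 12, x = y ^+ 9 & G \isog Zp 12].
Proof.
move=> GE ox oy xy3; have y3 := mulg1_eq xy3.
have oy12 : #[y] = 12.
  by apply: divn_gcd3_eq4 => //; rewrite -orderXgcd -y3 orderV.
have x9 : x = y ^+ 9.
  apply: (mulIg (y ^+ 3)); rewrite xy3 -expgD.
  by apply/esym/eqP; rewrite -order_dvdn oy12.
have Gy : G :=: <[y]>.
  apply/eqP; rewrite eqEsubset GE gen_subG cycle_subG mem_gen ?set22 // andbT.
  by apply/subsetP => z /set2P [] ->; rewrite ?x9 ?mem_cycle ?cycle_id.
by split => //; rewrite Gy isog_sym -oy12 Zp_isog.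
Qed.

Theorem lemma2p5 (gT : finGroupType) (G : {group gT}) (x y : gT) :
  G :=: <<[set x; y]>> ->
  #[x] = 4%N -> (5 <= #[y])%N -> (3 <= #[x * y])%N ->
  ~ [/\ #[y] = 12%N, x = y ^+ 9 & G \isog Zp 12] ->
  is_ORR G [set x; y].
Proof.
move=> GE ox oy oxy not_Zp12.
have xy3 : x * y ^+ 3 != 1.
  by apply/eqP => /(cube_inverse_generator_Zp12 GE ox oy).
exact: cay_set2_ORR.
Qed.
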